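(* Let $S$ be a numerical semigroup, let $b\in\mathrm{IBetti}(S)$ and let $s\in S$. Write $s=\omega_s+q_sb$ with $\omega_s\in\mathrm{Ap}(S;b)$ and $q_s\in\mathbb N$. Then $$|\mathrm B(s;\{b\})|=\begin{cases}\binom{\mathrm i(b)+q_s-1}{q_s}&\text{if }\mathfrak d(\omega_s)=1,\\ 0&\text{otherwise.}\end{cases}$$
   Context: A numerical semigroup $S$ is a submonoid of $(\mathbb N,+)$ with finite complement, minimally generated by $\{n_1,\dots,n_e\}$. For $m\in S$, the Apéry set is $\mathrm{Ap}(S;m)=\{s\in S: s-m\notin S\}$; every $s\in S$ is uniquely $s=\omega+qm$ with $\omega\in\mathrm{Ap}(S;m)$, $q\in\mathbb N$. Let $\varphi:\mathbb N^e\to S$, $\varphi(a)=\sum_ia_in_i$; $\mathrm Z(s)=\varphi^{-1}(s)$, $\mathfrak d(s)=|\mathrm Z(s)|$. $\nabla_s$ is the graph on $\mathrm Z(s)$ with distinct $x,y$ adjacent iff $x\cdot y\ne0$; $s$ is a Betti element if $\nabla_s$ is disconnected. A factorization $z\in\mathrm Z(s)$ is isolated if $z\cdot x=0$ for all $x\in\mathrm Z(s)\setminus\{z\}$; $\mathrm I(s)$ is the set of isolated factorizations of $s$, $\mathrm i(s)=|\mathrm I(s)|$, and $\mathrm I(\Lambda)=\bigcup_{t\in\Lambda}\mathrm I(t)$ for $\Lambda\subseteq S$. $\mathrm I_s(S)$ is the set of $z\in\mathbb N^e$ such that $\varphi(z)$ has exactly one factorization. $\mathrm{IBetti}(S)$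 is the set of Betti elements $b$ with $\mathrm I(b)\neq\emptyset$. For $\Lambda\subseteq S$, $\mathrm B(s;\Lambda)=\{w+x_1+\cdots+x_l\in\mathrm Z(s): w\in\mathrm I_s(S),\ l\ge0,\ x_1,\dots,x_l\in\mathrm I(\Lambda)\}$. *)

From mathcomp Require Import all_boot.
Set Implicit Arguments. Unset Strict Implicit. Unset Printing Implicit Defensive.

(* A numerical semigroup S minimally generated by n_0,...,n_{e-1},
   factorizations are elements of N^e encoded as {ffun 'I_e -> nat}. *)
Section NS.
Variables (e : nat) (n : 'I_e -> nat).

Definition factn := {ffun 'I_e -> nat}.

Definition phi (z : factn) : nat := \sum_(i < e) z i * n i.

Definition inS (s : nat) : Prop := exists z : factn, phi z = s.

Definition is_min_numsg : Prop :=
  [/\ (forall i, 0 < n i),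
      (exists F, forall x, F <= x -> inS x) &
      (forall i, ~ exists z : factn, z i = 0 /\ phi z = n i)].

Definition inZ (s : nat) (z : factn) : Prop := phi z = s.

Definition dotf (x y : factn) : nat := \sum_(i < e) x i * y i.

Definition has_card (P : factn -> Prop) (k : nat) : Prop :=
  exists l : seq factn, [/\ uniq l, (forall z, P z <-> z \in l) & size l = k].

(* Apery set Ap(S;m) = {s in S : s - m notin S} (s - m an integer) *)
Definition inApery (m s : nat) : Prop := inS s /\ ~ (m <= s /\ inS (s - m)).

Definition adjf (x y : factn) : bool := (x != y) && (dotf x y != 0).

Definition nabla_connected (s : nat) : Prop :=
  forall x y, inZ s x -> inZ s y ->
    exists p : seq factn, (forall u, u \in p -> inZ s u) /\
                          path adjf x p /\ last x p = y.

Definition is_Betti (s : nat) : Prop := inS s /\ ~ nabla_connected s.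

Definition isolated (s : nat) (z : factn) : Prop :=
  inZ s z /\ forall x, inZ s x -> x <> z -> dotf z x = 0.

Definition isolatedL (Lam : nat -> Prop) (z : factn) : Prop :=
  exists t, Lam t /\ isolated t z.

Definition in_Is (z : factn) : Prop := has_card (inZ (phi z)) 1.

Definition is_IBetti (b : nat) : Prop := is_Betti b /\ exists z, isolated b z.

Definition addf (x y : factn) : factn := [ffun i => x i + y i].
Definition zerof : factn := [ffun _ => 0].
Definition sumf (xs : seq factn) : factn := foldr addf zerof xs.

Definition inB (s : nat) (Lam : nat -> Prop) (z : factn) : Prop :=
  inZ s z /\ exists w (xs : seq factn),
    in_Is w /\ (forall x, x \in xs -> isolatedL Lam x) /\ z = addf w (sumf xs).

End NS.

From mathcomp Require Import all_boot.
From mathcomp Require Import zify.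
Set Implicit Arguments. Unset Strict Implicit. Unset Printing Implicit Defensive.

(* Write I(b) = {x_1,...,x_k}.  An element of B(s;{b}) is w' + x_{j_1} + ... +
   x_{j_l} with w' in I_s(S).  Two facts pin down w' and l:
   - if phi(w') - b were in S, then any factorization y of phi(w') - b gives
     the injection t |-> y + t of Z(b) into Z(phi w') = {w'}, so Z(b) would be
     a singleton and nabla_b connected; hence phi(w') lies in Ap(S;b);
   - decompositions s = omega + l b with omega in Ap(S;b) are unique,
     so phi(w') = omega_s and l = q_s.
   Thus B(s;{b}) is empty unless Z(omega_s) = {w0}, in which case it is
   w0 + (the sums of the size-q_s multisets drawn from I(b)).  Since distinct
   isolated factorizations are nonzero and pairwise orthogonal (disjoint
   supports), distinct multisets have distinct sums, and there are
   binom(k + q_s - 1, q_s) of them, by Pascal's rule. *)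

Section FactorizationArithmetic.
Variable e : nat.
Implicit Types x y z : factn e.

Lemma addfE x y i : addf x y i = x i + y i.
Proof. by rewrite ffunE. Qed.

Lemma zerofE i : zerof e i = 0.
Proof. by rewrite ffunE. Qed.

Lemma addf_inj x : injective (addf x).
Proof.
move=> y y' E; apply/ffunP => i.
by move/ffunP/(_ i): E; rewrite !addfE => /addnI.
Qed.

Lemma addfCA x y z : addf x (addf y z) = addf y (addf x z).
Proof. by apply/ffunP => i; rewrite !addfE addnCA. Qed.

Lemma sumf_rem x xs : x \in xs -> sumf xs = addf x (sumf (rem x xs)).
Proof.
elim: xs => [|y ys IH] //=; rewrite inE.
by case: eqVneq => [->|_] //= /IH ->; rewrite addfCA.
Qed.

Lemma dotf_eq0_coord x y i : dotf x y = 0 -> x i * y i = 0.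
Proof. by rewrite /dotf (bigD1 i) //=; lia. Qed.

End FactorizationArithmetic.

Section SemigroupFacts.
Variables (e : nat) (n : 'I_e -> nat).

Lemma phi_add x y : phi n (addf x y) = phi n x + phi n y.
Proof.
by rewrite /phi -big_split; apply: eq_bigr => i _; rewrite addfE mulnDl.
Qed.

Lemma phi_zero : phi n (zerof e) = 0.
Proof. by rewrite /phi big1 // => i _; rewrite zerofE. Qed.

Lemma phi_sumf b (xs : seq (factn e)) :
  (forall x, x \in xs -> phi n x = b) -> phi n (sumf xs) = size xs * b.
Proof.
elim: xs => [|x xs IH] Hxs /=; first by rewrite phi_zero.
rewrite phi_add Hxs ?mem_head // IH ?mulSn // => y Hy.
by apply: Hxs; rewrite inE Hy orbT.
Qed.

Lemma inS_add a c : inS n a -> inS n c -> inS n (a + c).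
Proof. by move=> [x <-] [y <-]; exists (addf x y); rewrite phi_add. Qed.

Lemma inS_mul k b : inS n b -> inS n (k * b).
Proof.
move=> Hb; elim: k => [|k IH]; first by exists (zerof e); exact: phi_zero.
by rewrite mulSn; exact: inS_add.
Qed.

Lemma apery_decomp_uniq m a w l q :
  inS n m -> inApery n m a -> inApery n m w ->
  a + l * m = w + q * m -> a = w /\ l = q.
Proof.
move=> Hm [Ha HaA] [Hw HwA] E.
case: (ltngtP l q) => Hlq.
- exfalso; apply: HaA; split; first nia.
  have -> : a - m = w + (q - l - 1) * m by nia.
  exact: inS_add Hw (inS_mul _ Hm).
- exfalso; apply: HwA; split; first nia.
  have -> : w - m = a + (l - q - 1) * m by nia.
  exact: inS_add Ha (inS_mul _ Hm).
- by subst l; split => //; lia.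
Qed.

Lemma subsingleton_connected b :
  (forall u v, inZ n b u -> inZ n b v -> u = v) -> nabla_connected n b.
Proof. by move=> H u v Hu Hv; exists [::]; split => //=; split => //; exact: H. Qed.

(* The image of an element of I_s(S) lies in Ap(S;b) for every Betti element
   b: otherwise Z(b) would embed into the singleton Z(phi w'). *)
Lemma in_Is_apery b w' : is_Betti n b -> in_Is n w' -> inApery n b (phi n w').
Proof.
move=> [_ Hnc] Hw'; split; first by exists w'.
case: Hw' => [[|a [|? ?]] [_ HZ _]] // [Hle [y Hy]].
apply: Hnc; apply: subsingleton_connected => u v Hu Hv.
have yt_eq_a t : inZ n b t -> addf y t = a.
  move=> Ht; have : addf y t \in [:: a] by apply/HZ; rewrite /inZ phi_add Hy Ht; lia.
  by rewrite inE => /eqP.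
by apply: (@addf_inj _ y); rewrite !yt_eq_a.
Qed.

End SemigroupFacts.

Section Multisets.
Variable e : nat.
Implicit Types (l xs : seq (factn e)) (z : factn e).

(* msums l q lists the sums of the size-q multisets of elements of l:
   either the multiset uses the head x of l (and x + a smaller multiset
   remains), or it is drawn from the tail only. *)
Fixpoint msums l (q : nat) {struct l} : seq (factn e) :=
  match l with
  | [::] => if q is 0 then [:: zerof e] else [::]
  | x :: l' => (fix msums_cons q := match q with
                  | 0 => [:: zerof e]
                  | q'.+1 => map (addf x) (msums_cons q') ++ msums l' q'.+1
                  end) q
  end.

Lemma msums_cons0 x l : msums (x :: l) 0 = [:: zerof e].
Proof. by []. Qed.

Lemma msums_consS x l q :
  msums (x :: l) q.+1 = map (addf x) (msums (x :: l) q) ++ msums l q.+1.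
Proof. by []. Qed.

Lemma size_msums l q : size (msums l q) = 'C(size l + q - 1, q).
Proof.
elim: l q => [|x l IH] q; first by case: q => [|q] //=; rewrite bin_small // subn1.
elim: q => [|q IHq]; first by rewrite msums_cons0 bin0.
rewrite msums_consS size_cat size_map IHq IH /=.
have -> : (size l).+1 + q.+1 - 1 = (size l + q).+1 by lia.
by rewrite binS addnC; congr (_ + _); congr 'C(_, _); lia.
Qed.

Lemma mem_msums l q z :
  z \in msums l q <-> exists xs, [/\ size xs = q, {subset xs <= l} & z = sumf xs].
Proof.
elim: l q z => [|x l IH] q z.
  split; first by case: q => [|q] //=; rewrite inE => /eqP ->; exists [::].
  case=> [[|y xs]] [<- Hs ->] //=; first by rewrite inE.
  by have := Hs y (mem_head _ _).
elim: q z => [|q IHq] z.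
  rewrite msums_cons0 inE; split; first by move/eqP->; exists [::].
  by case=> [[|y xs]] [] //= _ _ ->.
rewrite msums_consS mem_cat; split.
  case/orP => [/mapP [y /IHq [xs [<- Hs ->]] ->]|/IH [xs [Hsz Hs ->]]].
    exists (x :: xs); split => // u; rewrite inE => /orP [/eqP->|/Hs //].
    exact: mem_head.
  by exists xs; split => // u /Hs; rewrite inE => ->; rewrite orbT.
case=> xs [Hsz Hs ->]; have [Hx|Hx] := boolP (x \in xs).
  apply/orP; left; rewrite (sumf_rem Hx); apply: map_f; apply/IHq.
  by exists (rem x xs); split => [|u /mem_rem /Hs|]; rewrite ?size_rem ?Hsz.
apply/orP; right; apply/IH; exists xs; split => // u Hu.
by have := Hs u Hu; rewrite inE => /orP [/eqP Eu|//]; rewrite -Eu Hu in Hx.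
Qed.

Lemma msums_coord0 l q z i :
  (forall y, y \in l -> y i = 0) -> z \in msums l q -> z i = 0.
Proof.
move=> H /mem_msums [xs [_ Hs ->]].
elim: xs Hs => [|y xs IHx] Hs /=; first by rewrite zerofE.
by rewrite addfE H ?Hs ?mem_head // IHx // => u Hu; apply: Hs; rewrite inE Hu orbT.
Qed.

(* For nonzero pairwise orthogonal vectors, distinct multisets have distinct
   sums: a multiset containing x has a positive coordinate where all other
   vectors vanish. *)
Lemma msums_uniq l q :
  uniq l -> {in l &, forall x y, x != y -> dotf x y = 0} ->
  {in l, forall x, x != zerof e} -> uniq (msums l q).
Proof.
elim: l q => [|x l IH] q Hu Hd Hz; first by case: q.
move: Hu; rewrite cons_uniq => /andP [Hxl Hul].
have [i Hi] : exists i, 0 < x i.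
  case: (pickP (fun i => 0 < x i)) => [i Hi|H]; first by exists i.
  case/eqP: (Hz x (mem_head _ _)); apply/ffunP => i.
  by rewrite zerofE; have := H i; simpl; lia.
have l_coord0 y : y \in l -> y i = 0.
  move=> Hy; have Hxy : x != y by apply: contraNneq Hxl => ->.
  have Hy' : y \in x :: l by rewrite inE Hy orbT.
  have := dotf_eq0_coord i (Hd x y (mem_head _ _) Hy' Hxy).
  by move/eqP; rewrite muln_eq0 => /orP [/eqP|/eqP //]; lia.
elim: q => [|q IHq] //.
rewrite msums_consS cat_uniq map_inj_uniq ?IHq; last exact: addf_inj.
rewrite IH //; last 2 first.
- by move=> u v Hu' Hv'; apply: Hd; rewrite inE ?Hu' ?Hv' orbT.
- by move=> u Hu'; apply: Hz; rewrite inE Hu' orbT.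
rewrite andbT; apply/hasPn => z Hz1; apply/mapP => [[y _ Ez]].
by move: (msums_coord0 l_coord0 Hz1); rewrite Ez addfE; lia.
Qed.

End Multisets.

Section BettiMultisets.
Variables (e : nat) (n : 'I_e -> nat) (b : nat).
Hypotheses (n_pos : forall i, 0 < n i) (b_Betti : is_Betti n b).

(* b > 0: with positive generators, 0 has only the zero factorization. *)
Lemma Betti_pos : 0 < b.
Proof.
case: b_Betti; case: b => // _ []; apply: subsingleton_connected.
suff Z0 u : inZ n 0 u -> u = zerof e by move=> u v /Z0 -> /Z0 ->.
move=> Hu; apply/ffunP => i; rewrite zerofE.
by move: Hu; rewrite /inZ /phi (bigD1 i) //=; have := n_pos i; nia.
Qed.

Lemma isolated_orthogonal x y :
  isolated n b x -> isolated n b y -> x != y -> dotf x y = 0.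
Proof. by move=> [_ Hx] [Hy _] Hxy; apply: Hx Hy _; apply/eqP; rewrite eq_sym. Qed.

Lemma isolated_nonzero x : isolated n b x -> x != zerof e.
Proof.
move=> [Hx _]; apply: contraTneq Betti_pos => Ex.
by move: Hx; rewrite /inZ Ex phi_zero => <-.
Qed.

Variables (I : seq (factn e)) (w q : nat).
Hypotheses (I_isolated : forall x, isolated n b x <-> x \in I)
           (w_apery : inApery n b w).

Lemma inB_Betti_char z :
  inB n (w + q * b) (fun t => t = b) z <->
  exists w' xs, [/\ in_Is n w', phi n w' = w, size xs = q,
                    {subset xs <= I} & z = addf w' (sumf xs)].
Proof.
have phi_I xs : {subset xs <= I} -> phi n (sumf xs) = size xs * b.
  by move=> Hxs; apply: phi_sumf => x /Hxs /I_isolated [].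
split.
- move=> [Hz [w' [xs [Hw' [Hxs Ez]]]]].
  have sub_I : {subset xs <= I} by move=> x /Hxs [t [-> /I_isolated]].
  have Hphi : phi n w' + size xs * b = w + q * b.
    by rewrite -Hz Ez phi_add phi_I.
  have bS : inS n b by case: b_Betti.
  have [<- <-] := apery_decomp_uniq bS (in_Is_apery b_Betti Hw') w_apery Hphi.
  by exists w', xs.
- move=> [w' [xs [Hw' Hphi Hsz sub_I ->]]]; split.
    by rewrite /inZ phi_add phi_I // Hphi Hsz.
  exists w', xs; split => //; split => // x /sub_I /I_isolated Hx.
  by exists b.
Qed.

Lemma card_B_Betti_unique w0 :
  uniq I -> (forall z, inZ n w z <-> z \in [:: w0]) ->
  has_card (inB n (w + q * b) (fun t => t = b)) 'C(size I + q - 1, q).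
Proof.
move=> I_uniq Zw; have w0_fact : phi n w0 = w by apply/Zw; exact: mem_head.
have w0_Is : in_Is n w0 by rewrite /in_Is w0_fact; exists [:: w0].
exists (map (addf w0) (msums I q)); split.
- rewrite map_inj_uniq; last exact: addf_inj.
  apply: msums_uniq => // [x y /I_isolated Hx /I_isolated Hy|x /I_isolated].
    exact: isolated_orthogonal.
  exact: isolated_nonzero.
- move=> z; rewrite inB_Betti_char; split.
    move=> [w' [xs [_ /Zw]]]; rewrite inE => /eqP -> Hsz Hsub ->.
    by apply: map_f; apply/mem_msums; exists xs.
  case/mapP => y /mem_msums [xs [Hsz Hsub ->]] ->.
  by exists w0, xs.
- by rewrite size_map size_msums.
Qed.

Lemma B_Betti_empty :
  ~ has_card (inZ n w) 1 -> has_card (inB n (w + q * b) (fun t => t = b)) 0.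
Proof.
move=> Zw; exists [::]; split => // z; split => //.
by move/inB_Betti_char => [w' [xs [Hw' Hphi _ _ _]]]; case: Zw; rewrite -Hphi.
Qed.

End BettiMultisets.

Theorem corollary5p6 (e : nat) (n : 'I_e -> nat) (b s : nat) :
  is_min_numsg n -> is_IBetti n b -> inS n s ->
  forall (ib : nat) (w q : nat),
    has_card (isolated n b) ib ->
    inApery n b w -> s = w + q * b ->
    (has_card (inZ n w) 1 ->
       has_card (inB n s (fun t => t = b)) 'C(ib + q - 1, q)) /\
    (~ has_card (inZ n w) 1 ->
       has_card (inB n s (fun t => t = b)) 0).
Proof.
move=> [n_pos _ _] [b_Betti _] _ ib w q [I [I_uniq I_isolated <-]] w_apery ->.
split; last exact: B_Betti_empty.
case=> [[|w0 [|? ?]] [_ Zw _]] //.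
exact: card_B_Betti_unique.
Qed.
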